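(* Let $A>0$ and let $k_0$ be the largest integer strictly smaller than $\sigma$. Let $\phi(\cdot;A)$ be the solution of $$(\phi^m)''+\frac{N-1}{\xi}(\phi^m)'+\alpha\phi+\beta\xi\phi'=0,\qquad \phi(0)=A,\ \phi'(0)=0,$$ and let $B_j$ be the Taylor coefficients of $\phi^m(\cdot;A)$ at $\xi=0$. Then, as $\xi\to0$, $$f^m(\xi;A)=\sum_{j=0}^{k_0+2}B_j\xi^j+\frac{A^p}{(\sigma+2)(\sigma+N)}\xi^{\sigma+2}+o(\xi^{\sigma+2})\quad\text{if }\sigma\notin\mathbb{N},$$ and $$f^m(\xi;A)=\sum_{j=0}^{k_0+3}B_j\xi^j+\frac{A^p}{(\sigma+2)(\sigma+N)}\xi^{\sigma+2}+o(\xi^{\sigma+2})\quad\text{if }\sigma\in\mathbb{N}\ (k_0=\sigma-1).$$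
   Context: Let $N\geq1$, $m>1$, $\sigma>0$, $p>m$, $L=\sigma(m-1)+2(p-1)$, $\alpha=(\sigma+2)/L$, $\beta=(p-m)/L$. For $A>0$, $f(\cdot;A)$ denotes the unique solution of $$(f^m)''+\frac{N-1}{\xi}(f^m)'+\alpha f+\beta\xi f'-\xi^{\sigma}f^p=0,\qquad f(0)=A,\ f'(0)=0,$$ positive on a maximal interval $[0,\xi_{\max}(A))$ with $f^m\in C^2$ there. *)

From Stdlib Require Import Reals Lra.
From Coquelicot Require Import Coquelicot.
Open Scope R_scope.

Definition Lc (m sigma p : R) : R := sigma * (m - 1) + 2 * (p - 1).
Definition alpha (m sigma p : R) : R := (sigma + 2) / Lc m sigma p.
Definition beta (m sigma p : R) : R := (p - m) / Lc m sigma p.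

Definition is_f_solution (N : nat) (m sigma p A d : R) (f : R -> R) : Prop :=
  let u := fun x => Rpower (f x) m in
  0 < d /\
  (forall x, 0 <= x < d -> 0 < f x) /\
  f 0 = A /\
  filterlim (fun x => (f x - f 0) / x) (at_right 0) (locally 0) /\
  (forall x, 0 < x < d ->
     ex_derive f x /\ ex_derive u x /\ ex_derive (Derive u) x /\
     Derive_n u 2 x + (INR N - 1) / x * Derive u x
       + alpha m sigma p * f x + beta m sigma p * x * Derive f x
       - Rpower x sigma * Rpower (f x) p = 0) /\
  (* f^m is C^2 up to xi = 0: u, u', u'' extend continuously to 0,
     the extensions being the one-sided derivatives at 0 *)
  (exists l1 l2 : R,
     filterlim (Derive u) (at_right 0) (locally l1) /\
     filterlim (Derive_n u 2) (at_right 0) (locally l2) /\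
     filterlim (fun x => (u x - u 0) / x) (at_right 0) (locally l1) /\
     filterlim (fun x => (Derive u x - l1) / x) (at_right 0) (locally l2)).

(* phi is a solution of the source-free problem
     (phi^m)'' + (N-1)/xi (phi^m)' + alpha phi + beta xi phi' = 0,
     phi(0) = A, phi'(0) = 0,
   on (0,d), positive, with phi^m (extended to (-d,d)) infinitely
   differentiable, so that its Taylor coefficients at 0 make sense. *)
Definition is_phi_solution (N : nat) (m sigma p A d : R) (phi : R -> R) : Prop :=
  let g := fun x => Rpower (phi x) m in
  0 < d /\
  (forall x, - d < x < d -> 0 < phi x) /\
  (forall n x, - d < x < d -> ex_derive_n g n x) /\
  phi 0 = A /\
  ex_derive phi 0 /\ Derive phi 0 = 0 /\
  (forall x, 0 < x < d ->
     ex_derive phi x /\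
     Derive_n g 2 x + (INR N - 1) / x * Derive g x
       + alpha m sigma p * phi x + beta m sigma p * x * Derive phi x = 0).

Definition taylorB (m : R) (phi : R -> R) (j : nat) : R :=
  Derive_n (fun x => Rpower (phi x) m) j 0 / INR (Factorial.fact j).

Definition little_o_right (h : R -> R) (e : R) : Prop :=
  filterlim (fun x => h x / Rpower x e) (at_right 0) (locally 0).

From Stdlib Require Import Reals Lra Lia.
From Coquelicot Require Import Coquelicot.
Open Scope R_scope.

(* Write u = f^m, g = phi^m and w = u - g.  Subtracting the two equations, in the radial form
   (x^(N-1) v')' = x^(N-1) (v'' + (N-1)/x v'), gives
     (x^(N-1) w')' = x^(N-1) (x^sigma f^p + E),   E = - alpha (f - phi) - beta x (f' - phi'),
   and |E| <= K (|w| + x |w'|) near 0 because f = u^(1/m), phi = g^(1/m) with u, g close to A^m.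
   Integrating twice from 0, bounds |w|, x |w'| = O(x^a) improve to O(x^(a+2)) as long as
   a <= sigma, so after finitely many steps E = o(x^sigma); two more integrations then give
   w = A^p x^(sigma+2) / ((sigma+2)(sigma+N)) + o(x^(sigma+2)).  Finally g is smooth at 0, so its
   Taylor polynomial of degree k0+2 (k0+3 if sigma is an integer) is g + o(x^(sigma+2)). *)

Notation rlim h L := (filterlim h (at_right 0) (locally L)).

Lemma Rpower_pos (x r : R) : 0 < Rpower x r.
Proof. apply exp_pos. Qed.

Lemma Rpower_nat_plus (x s : R) (n : nat) : 0 < x -> Rpower x (INR n + s) = x ^ n * Rpower x s.
Proof. intros Hx. rewrite Rpower_plus, Rpower_pow by exact Hx. reflexivity. Qed.

Lemma Rpower_le_small_base (x a b : R) : 0 < x <= 1 -> b <= a -> Rpower x a <= Rpower x b.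
Proof.
  intros Hx Hab. unfold Rpower.
  assert (ln x <= 0) by (rewrite <- ln_1; apply ln_le; lra).
  destruct (Rle_lt_or_eq_dec (a * ln x) (b * ln x)) as [Hlt | ->]; [nra | | lra].
  left. apply exp_increasing, Hlt.
Qed.

Lemma Rpower_le_ends (y r c C : R) : 0 < c -> c <= y <= C ->
  Rpower y r <= Rpower c r + Rpower C r.
Proof.
  intros Hc Hy. generalize (Rpower_pos c r) (Rpower_pos C r). intros Pc PC.
  destruct (Rle_lt_dec 0 r).
  - assert (Rpower y r <= Rpower C r) by (apply Rle_Rpower_l; lra). lra.
  - assert (Hinv : Rpower c (- r) <= Rpower y (- r)) by (apply Rle_Rpower_l; lra).
    apply Rinv_le_contravar in Hinv; [|apply Rpower_pos].
    rewrite !Rpower_Ropp, !Rinv_inv in Hinv. lra.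
Qed.

Lemma Rpower_Rpower_inv (y m : R) : 0 < y -> m <> 0 -> Rpower (Rpower y m) (1 / m) = y.
Proof.
  intros Hy Hm. rewrite Rpower_mult. replace (m * (1 / m)) with 1 by (field; exact Hm).
  apply Rpower_1, Hy.
Qed.

Lemma is_derive_Rpower (t r : R) : 0 < t ->
  is_derive (fun x => Rpower x r) t (r * Rpower t (r - 1)).
Proof. intros Ht. apply is_derive_Reals, derivable_pt_lim_power, Ht. Qed.

Lemma is_derive_Rpower_comp (F : R -> R) (x l r : R) : 0 < F x -> is_derive F x l ->
  is_derive (fun t => Rpower (F t) r) x (r * Rpower (F x) (r - 1) * l).
Proof.
  intros Hpos HD.
  assert (H := is_derive_comp (fun y => Rpower y r) F x _ _ (is_derive_Rpower (F x) r Hpos) HD).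
  replace (r * Rpower (F x) (r - 1) * l) with (scal l (r * Rpower (F x) (r - 1))); [exact H|].
  unfold scal; simpl; unfold mult; simpl. ring.
Qed.

Lemma continuous_Rpower (a r : R) : 0 < a -> continuous (fun y => Rpower y r) a.
Proof.
  intros Ha. apply (ex_derive_continuous (K:=R_AbsRing) (V:=R_NormedModule)).
  eexists. apply is_derive_Rpower, Ha.
Qed.

Lemma Derive_of_Derive_Rpower (h : R -> R) (y m : R) : m <> 0 -> 0 < h y -> ex_derive h y ->
  Derive h y = Derive (fun t => Rpower (h t) m) y * Rpower (Rpower (h y) m) ((1 - m) / m) / m.
Proof.
  intros Hm Hy Hex.
  replace (Derive (fun t => Rpower (h t) m) y) with (m * Rpower (h y) (m - 1) * Derive h y)
    by (symmetry; apply is_derive_unique, is_derive_Rpower_comp, Derive_correct; assumption).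
  rewrite Rpower_mult.
  replace (m * Rpower (h y) (m - 1) * Derive h y * Rpower (h y) (m * ((1 - m) / m)) / m)
    with (Derive h y * (Rpower (h y) (m - 1) * Rpower (h y) (m * ((1 - m) / m))))
    by (field; exact Hm).
  rewrite <- Rpower_plus. replace (m - 1 + m * ((1 - m) / m)) with 0 by (field; exact Hm).
  rewrite Rpower_O by exact Hy. ring.
Qed.

Definition Rpower_lip (r c C : R) : R := Rabs r * (Rpower c (r - 1) + Rpower C (r - 1)).

Lemma Rpower_lip_ge0 (r c C : R) : 0 <= Rpower_lip r c C.
Proof.
  apply Rmult_le_pos; [apply Rabs_pos|].
  generalize (Rpower_pos c (r - 1)) (Rpower_pos C (r - 1)); lra.
Qed.

Lemma Rpower_lipschitz (y z r c C : R) : 0 < c -> c <= y <= C -> c <= z <= C ->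
  Rabs (Rpower y r - Rpower z r) <= Rpower_lip r c C * Rabs (y - z).
Proof.
  intros Hc Hy Hz.
  assert (Hmin := Rmin_glb z y c (proj1 Hz) (proj1 Hy)).
  assert (Hmax := Rmax_lub z y C (proj2 Hz) (proj2 Hy)).
  destruct (MVT_gen (fun t => Rpower t r) z y (fun t => r * Rpower t (r - 1))) as [e [He Heq]].
  - intros t Ht. apply is_derive_Rpower. lra.
  - intros t Ht. apply continuity_pt_filterlim, (ex_derive_continuous (fun t => Rpower t r)).
    eexists. apply is_derive_Rpower. lra.
  - rewrite Heq, Rabs_mult, Rabs_mult, (Rabs_pos_eq (Rpower e _)) by (left; apply Rpower_pos).
    unfold Rpower_lip. apply Rmult_le_compat_r; [apply Rabs_pos|].
    apply Rmult_le_compat_l; [apply Rabs_pos|]. apply Rpower_le_ends; lra.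
Qed.

Lemma mul_Rpower_lipschitz (y z dy dz r c C : R) :
  0 < c -> c <= y <= C -> c <= z <= C -> Rabs dz <= 1 ->
  Rabs (dy * Rpower y r - dz * Rpower z r)
  <= (Rpower c r + Rpower C r) * Rabs (dy - dz) + Rpower_lip r c C * Rabs (y - z).
Proof.
  intros Hc Hy Hz Hdz.
  replace (dy * Rpower y r - dz * Rpower z r)
    with ((dy - dz) * Rpower y r + dz * (Rpower y r - Rpower z r)) by ring.
  eapply Rle_trans; [apply Rabs_triang|]. rewrite !Rabs_mult.
  rewrite (Rabs_pos_eq (Rpower y r)) by (left; apply Rpower_pos).
  assert (Rpower y r <= Rpower c r + Rpower C r) by (apply Rpower_le_ends; lra).
  assert (Hlip := Rpower_lipschitz y z r c C Hc Hy Hz).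
  generalize (Rabs_pos (dy - dz)) (Rabs_pos (Rpower y r - Rpower z r)). intros.
  nra.
Qed.

Lemma at_right0_iff (P : R -> Prop) :
  at_right 0 P <-> exists del, 0 < del /\ forall x, 0 < x < del -> P x.
Proof.
  split.
  - intros [del Hdel]. exists del. split; [apply cond_pos|].
    intros x Hx. apply Hdel; [|lra].
    change (Rabs (x - 0) < del). rewrite Rminus_0_r, Rabs_pos_eq; lra.
  - intros (del & Hdel & HP). exists (mkposreal del Hdel). intros x Hx Hx0.
    change (Rabs (x - 0) < del) in Hx. rewrite Rminus_0_r, Rabs_pos_eq in Hx by lra.
    apply HP; lra.
Qed.

Lemma at_right0_lt (d : R) : 0 < d -> at_right 0 (fun x => x < d).
Proof. intros Hd. apply at_right0_iff. exists d. split; [exact Hd|]. intros x Hx; lra. Qed.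

Lemma at_right0_pos : at_right 0 (fun x => 0 < x).
Proof. apply at_right0_iff. exists 1. split; [lra|]. intros x Hx; lra. Qed.

Lemma rlim_abs (h : R -> R) (L : R) :
  rlim h L <-> forall eps, 0 < eps -> at_right 0 (fun x => Rabs (h x - L) < eps).
Proof.
  rewrite filterlim_locally. split.
  - intros H eps Heps. exact (H (mkposreal eps Heps)).
  - intros H eps. exact (H eps (cond_pos eps)).
Qed.

Lemma rlim_const (c : R) : rlim (fun _ => c) c.
Proof. apply filterlim_const. Qed.

Lemma rlim_plus (F G : R -> R) (a b : R) :
  rlim F a -> rlim G b -> rlim (fun x => F x + G x) (a + b).
Proof.
  intros HF HG. exact (filterlim_comp_2 F G Rplus HF HG (filterlim_plus (K:=R_AbsRing) a b)).
Qed.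

Lemma rlim_mult (F G : R -> R) (a b : R) :
  rlim F a -> rlim G b -> rlim (fun x => F x * G x) (a * b).
Proof.
  intros HF HG. exact (filterlim_comp_2 F G Rmult HF HG (filterlim_mult (K:=R_AbsRing) a b)).
Qed.

Lemma rlim_minus (F G : R -> R) (a b : R) :
  rlim F a -> rlim G b -> rlim (fun x => F x - G x) (a - b).
Proof.
  intros HF HG.
  assert (H := rlim_plus _ _ _ _ HF (rlim_mult _ _ _ _ (rlim_const (-1)) HG)).
  replace (a - b) with (a + -1 * b) by ring.
  eapply filterlim_ext; [|exact H]. intros x; simpl; ring.
Qed.

Lemma rlim_cont (h : R -> R) : continuous h 0 -> rlim h (h 0).
Proof. intros H. exact (filterlim_filter_le_1 _ (filter_le_within _) H). Qed.

Lemma rlim_comp_cont (F h : R -> R) (a : R) :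
  rlim F a -> continuous h a -> rlim (fun x => h (F x)) (h a).
Proof. intros HF Hh. exact (filterlim_comp _ _ _ F h _ _ _ HF Hh). Qed.

Lemma rlim_unique (h : R -> R) (L1 L2 : R) : rlim h L1 -> rlim h L2 -> L1 = L2.
Proof. intros H1 H2. exact (filterlim_locally_unique (F := at_right 0) h L1 L2 H1 H2). Qed.

Lemma rlim_pow (n : nat) : rlim (fun x => x ^ n) (0 ^ n).
Proof.
  apply (rlim_cont (fun x => x ^ n)).
  apply (ex_derive_continuous (K:=R_AbsRing) (V:=R_NormedModule)). auto_derive; auto.
Qed.

Lemma rlim_Rpower (e : R) : 0 < e -> rlim (fun x => Rpower x e) 0.
Proof.
  intros He. apply rlim_abs. intros eps Heps. apply at_right0_iff.
  exists (Rpower eps (/ e)). split; [apply Rpower_pos|].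
  intros x Hx. rewrite Rminus_0_r, Rabs_pos_eq by (left; apply Rpower_pos).
  replace eps with (Rpower (Rpower eps (/ e)) e).
  - apply Rlt_Rpower_l; lra.
  - rewrite Rpower_mult, Rinv_l, Rpower_1 by lra. reflexivity.
Qed.

Lemma rlim_0_of_le (F G : R -> R) (L : R) :
  at_right 0 (fun x => Rabs (F x) <= L * Rabs (G x)) -> rlim G 0 -> rlim F 0.
Proof.
  intros HF HG. apply rlim_abs. intros eps Heps.
  assert (HL : 0 < Rabs L + 1) by (generalize (Rabs_pos L); lra).
  generalize (filter_and _ _ HF (proj1 (rlim_abs _ _) HG (eps / (Rabs L + 1))
                                   (Rdiv_lt_0_compat _ _ Heps HL))).
  apply filter_imp. intros x [H1 H2]. rewrite Rminus_0_r in H2 |- *.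
  apply (Rmult_lt_compat_l (Rabs L + 1)) in H2; [|exact HL].
  replace ((Rabs L + 1) * (eps / (Rabs L + 1))) with eps in H2 by (field; lra).
  generalize (Rle_abs L) (Rabs_pos (G x)). nra.
Qed.

Lemma rlim_of_Rpower_bound (h : R -> R) (C e : R) : 0 < e ->
  at_right 0 (fun x => Rabs (h x) <= C * Rpower x e) -> rlim h 0.
Proof.
  intros He Hh. apply (rlim_0_of_le h (fun x => Rpower x e) C); [|exact (rlim_Rpower e He)].
  revert Hh. apply filter_imp. intros x Hx.
  rewrite (Rabs_pos_eq (Rpower x e)) by (left; apply Rpower_pos). exact Hx.
Qed.

Lemma Rpower_quotient_lim (f : R -> R) (A r : R) : 0 < A -> rlim f A ->
  rlim (fun x => (f x - A) / x) 0 -> rlim (fun x => (Rpower (f x) r - Rpower A r) / x) 0.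
Proof.
  intros HA Hf Hq.
  apply (rlim_0_of_le _ (fun x => (f x - A) / x) (Rpower_lip r (A / 2) (3 * A / 2)));
    [|exact Hq].
  generalize (filter_and _ _ at_right0_pos (proj1 (rlim_abs _ _) Hf (A / 2) ltac:(lra))).
  apply filter_imp. intros x [Hx Hclose]. apply Rabs_def2 in Hclose.
  unfold Rdiv. rewrite !Rabs_mult, <- Rmult_assoc.
  apply Rmult_le_compat_r; [apply Rabs_pos|]. apply Rpower_lipschitz; lra.
Qed.

Lemma Rabs_le_of_derive_bound (F F' : R -> R) (K x : R) : 0 < x ->
  (forall t, 0 < t <= x -> is_derive F t (F' t)) ->
  (forall t, 0 < t <= x -> Rabs (F' t) <= K) ->
  rlim F 0 -> Rabs (F x) <= K * x.
Proof.
  intros Hx HD HB HF.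
  destruct (Rle_lt_dec (Rabs (F x)) (K * x)) as [Hle | Hlt]; [exact Hle | exfalso].
  destruct (proj1 (at_right0_iff _) (proj1 (rlim_abs _ _) HF (Rabs (F x) - K * x) ltac:(lra)))
    as (del & Hdel & Hsmall).
  set (y := Rmin del x / 2).
  assert (Hy : 0 < y < x /\ y < del)
    by (unfold y; generalize (Rmin_l del x) (Rmin_r del x) (Rmin_glb_lt del x 0); lra).
  specialize (Hsmall y ltac:(lra)). rewrite Rminus_0_r in Hsmall.
  destruct (MVT_gen F y x F') as [c [Hc Heq]];
    rewrite Rmin_left, Rmax_right in * by lra.
  - intros t Ht. apply HD; lra.
  - intros t Ht. apply continuity_pt_filterlim, (ex_derive_continuous F).
    exists (F' t). apply HD; lra.
  - assert (HBc := HB c ltac:(lra)).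
    assert (Rabs (F x - F y) <= K * (x - y)).
    { rewrite Heq, Rabs_mult, (Rabs_pos_eq (x - y)) by lra.
      apply Rmult_le_compat_r; lra. }
    assert (Rabs (F x) <= Rabs (F x - F y) + Rabs (F y)).
    { replace (F x) with ((F x - F y) + F y) at 1 by ring. apply Rabs_triang. }
    assert (0 <= K) by (generalize (Rabs_pos (F' c)); lra).
    nra.
Qed.

Lemma is_derive_radial (v : R -> R) (n : nat) (x dv : R) : 0 < x -> is_derive v x dv ->
  is_derive (fun t => t ^ n * v t) x (x ^ n * (dv + INR n / x * v x)).
Proof.
  intros Hx Hv.
  assert (Hpow : is_derive (fun t => t ^ n) x (INR n * 1 * x ^ Nat.pred n))
    by (apply is_derive_pow, (is_derive_id (K:=R_AbsRing))).
  eapply is_derive_ext; [intros t; reflexivity|].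
  replace (x ^ n * (dv + INR n / x * v x))
    with (plus (mult (INR n * 1 * x ^ Nat.pred n) (v x)) (mult (x ^ n) dv)).
  - exact (is_derive_mult _ _ _ _ _ Hpow Hv (fun a b => Rmult_comm a b)).
  - change (plus ?a ?b) with (a + b). change (mult ?a ?b) with (a * b).
    destruct n as [|n]; simpl; field; lra.
Qed.

Lemma radial_integral_asymptotic (F h : R -> R) (k : nat) (s c eps del : R) :
  0 <= s -> 0 <= eps ->
  (forall t, 0 < t < del -> is_derive (fun y => y ^ k * F y) t (t ^ k * h t)) ->
  rlim F 0 ->
  (forall t, 0 < t < del -> Rabs (h t - c * Rpower t s) <= eps * Rpower t s) ->
  forall x, 0 < x < del ->
    Rabs (F x - c / (INR k + s + 1) * Rpower x (s + 1)) <= eps * Rpower x (s + 1).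
Proof.
  intros Hs Heps HD HF Hh x Hx.
  set (e := INR k + s + 1).
  assert (He : 0 < e) by (unfold e; generalize (pos_INR k); lra).
  assert (HG : Rabs (x ^ k * F x - c / e * Rpower x e) <= x ^ k * (eps * Rpower x s) * x).
  { apply (Rabs_le_of_derive_bound (fun y => y ^ k * F y - c / e * Rpower y e)
      (fun y => y ^ k * h y - c / e * (e * Rpower y (e - 1)))); [lra | | |].
    - intros t Ht. apply (is_derive_minus (fun y => y ^ k * F y)); [apply HD; lra|].
      apply is_derive_scal, is_derive_Rpower; lra.
    - intros t Ht.
      replace (e - 1) with (INR k + s) by (unfold e; ring). rewrite Rpower_nat_plus by lra.
      replace (t ^ k * h t - c / e * (e * (t ^ k * Rpower t s)))
        with (t ^ k * (h t - c * Rpower t s)) by (field; lra).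
      rewrite Rabs_mult, (Rabs_pos_eq (t ^ k)) by (apply pow_le; lra).
      apply Rmult_le_compat; [apply pow_le; lra | apply Rabs_pos | apply pow_incr; lra |].
      eapply Rle_trans; [apply Hh; lra|].
      apply Rmult_le_compat_l; [exact Heps|]. apply Rle_Rpower_l; lra.
    - assert (HL := rlim_minus _ _ _ _ (rlim_mult _ _ _ _ (rlim_pow k) HF)
                      (rlim_mult _ _ _ _ (rlim_const (c / e)) (rlim_Rpower e He))).
      rewrite !Rmult_0_r, Rminus_0_r in HL. exact HL. }
  replace e with (INR k + (s + 1)) in HG at 2 by (unfold e; ring).
  rewrite Rpower_nat_plus in HG by lra.
  replace (x ^ k * F x - c / e * (x ^ k * Rpower x (s + 1)))
    with (x ^ k * (F x - c / e * Rpower x (s + 1))) in HG by ring.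
  assert (Hxk : 0 < x ^ k) by (apply pow_lt; lra).
  rewrite Rabs_mult, (Rabs_pos_eq (x ^ k)) in HG by lra.
  replace (x ^ k * (eps * Rpower x s) * x) with (x ^ k * (eps * Rpower x (s + 1))) in HG
    by (rewrite Rpower_plus, Rpower_1 by lra; ring).
  apply (Rmult_le_reg_l (x ^ k)); [exact Hxk | exact HG].
Qed.

Corollary radial_integral_bound (F h : R -> R) (k : nat) (s eps del : R) :
  0 <= s -> 0 <= eps ->
  (forall t, 0 < t < del -> is_derive (fun y => y ^ k * F y) t (t ^ k * h t)) ->
  rlim F 0 ->
  (forall t, 0 < t < del -> Rabs (h t) <= eps * Rpower t s) ->
  forall x, 0 < x < del -> Rabs (F x) <= eps * Rpower x (s + 1).
Proof.
  intros Hs Heps HD HF Hh x Hx.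
  assert (H := radial_integral_asymptotic F h k s 0 eps del Hs Heps HD HF).
  replace (F x) with (F x - 0 / (INR k + s + 1) * Rpower x (s + 1))
    by (unfold Rdiv; ring).
  apply H; [|exact Hx]. intros t Ht. rewrite Rmult_0_l, Rminus_0_r. apply Hh, Ht.
Qed.

Section Bootstrap.

Variables (d sig K Q0 : R) (n : nat) (w w1 Q E : R -> R).
Hypothesis Hd : 0 < d <= 1.
Hypothesis Hsig : 0 < sig.
Hypothesis Hw : forall x, 0 < x < d -> is_derive w x (w1 x).
Hypothesis Hw1 : forall x, 0 < x < d ->
  is_derive (fun t => t ^ n * w1 t) x (x ^ n * (Rpower x sig * Q x + E x)).
Hypothesis Lw : rlim w 0.
Hypothesis Lw1 : rlim w1 0.
Hypothesis LQ : rlim Q Q0.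
Hypothesis HQ : forall x, 0 < x < d -> Rabs (Q x) <= K.
Hypothesis HE : forall x, 0 < x < d -> Rabs (E x) <= K * (Rabs (w x) + x * Rabs (w1 x)).

Lemma is_derive_w_radial x : 0 < x < d -> is_derive (fun t => t ^ 0 * w t) x (x ^ 0 * w1 x).
Proof.
  intros Hx. apply (is_derive_ext w); [intros t; simpl; ring|].
  simpl. rewrite Rmult_1_l. apply Hw, Hx.
Qed.

Lemma bootstrap_K_ge0 : 0 <= K.
Proof. generalize (HQ (d / 2) ltac:(lra)) (Rabs_pos (Q (d / 2))). lra. Qed.

Definition power_bound (a : R) : Prop :=
  exists M del, 0 <= M /\ 0 < del <= d /\ forall x, 0 < x < del ->
    Rabs (w x) <= M * Rpower x a /\ x * Rabs (w1 x) <= M * Rpower x a.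

Lemma power_bound_0 : power_bound 0.
Proof.
  assert (Hsmall := filter_and _ _ (at_right0_lt d (proj1 Hd))
    (filter_and _ _ (proj1 (rlim_abs _ _) Lw 1 Rlt_0_1) (proj1 (rlim_abs _ _) Lw1 1 Rlt_0_1))).
  destruct (proj1 (at_right0_iff _) Hsmall) as (del & Hdel & Hb).
  exists 1, (Rmin del d). split; [lra|]. split.
  - split; [apply Rmin_glb_lt; lra | apply Rmin_r].
  - intros x Hx. generalize (Rmin_l del d). intros.
    destruct (Hb x ltac:(lra)) as (H0 & H1 & H2). rewrite Rminus_0_r in H1, H2.
    rewrite Rpower_O by lra. generalize (Rabs_pos (w1 x)). split; nra.
Qed.

Lemma power_bound_le (a b : R) : b <= a -> power_bound a -> power_bound b.
Proof.
  intros Hab (M & del & HM & Hdel & HP). exists M, del. split; [exact HM|]. split; [exact Hdel|].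
  intros x Hx. destruct (HP x Hx) as [P1 P2].
  assert (Rpower x a <= Rpower x b) by (apply Rpower_le_small_base; lra).
  split; nra.
Qed.

(* Each step integrates the radial equation twice; it gains two powers of x only while the
   source term x^sig Q is not the dominant one. *)
Lemma power_bound_step (a : R) : 0 <= a <= sig -> power_bound a -> power_bound (a + 2).
Proof.
  intros Ha (M & del & HM & Hdel & HP).
  assert (HK := bootstrap_K_ge0).
  set (K1 := K * (1 + 2 * M)).
  assert (HK1 : 0 <= K1) by (unfold K1; nra).
  assert (Hsource : forall x, 0 < x < del -> Rabs (Rpower x sig * Q x + E x) <= K1 * Rpower x a).
  { intros x Hx. destruct (HP x Hx) as [P1 P2].
    assert (Rpower x sig <= Rpower x a) by (apply Rpower_le_small_base; lra).
    assert (Rabs (Rpower x sig * Q x) <= Rpower x a * K).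
    { rewrite Rabs_mult, Rabs_pos_eq by (left; apply Rpower_pos).
      apply Rmult_le_compat; [left; apply Rpower_pos | apply Rabs_pos | lra | apply HQ; lra]. }
    assert (Rabs (E x) <= K * (2 * M * Rpower x a)).
    { eapply Rle_trans; [apply HE; lra|]. apply Rmult_le_compat_l; lra. }
    eapply Rle_trans; [apply Rabs_triang|]. unfold K1. lra. }
  assert (Hw1b : forall x, 0 < x < del -> Rabs (w1 x) <= K1 * Rpower x (a + 1)).
  { apply (radial_integral_bound w1 (fun x => Rpower x sig * Q x + E x) n a K1 del);
      try lra; [| exact Lw1 | exact Hsource].
    intros t Ht. apply Hw1; lra. }
  assert (Hwb : forall x, 0 < x < del -> Rabs (w x) <= K1 * Rpower x (a + 1 + 1)).
  { apply (radial_integral_bound w w1 0 (a + 1) K1 del); try lra; [|exact Lw|exact Hw1b].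
    intros t Ht. apply is_derive_w_radial; lra. }
  exists K1, del. split; [exact HK1|]. split; [exact Hdel|].
  intros x Hx. replace (a + 2) with (a + 1 + 1) by ring. split; [apply Hwb, Hx|].
  rewrite Rpower_plus, Rpower_1 by lra. assert (H := Hw1b x Hx). nra.
Qed.

Lemma power_bound_above : exists a, sig < a /\ power_bound a.
Proof.
  assert (Hk : forall k, power_bound (Rmin (2 * INR k) (sig + 2))).
  { induction k as [|k IH].
    - rewrite Rmult_0_r, Rmin_left by lra. exact power_bound_0.
    - set (a := Rmin (2 * INR k) (sig + 2)) in IH.
      assert (Ha : 0 <= a) by (unfold a; apply Rmin_glb; [generalize (pos_INR k) |]; lra).
      replace (Rmin (2 * INR (S k)) (sig + 2)) with (Rmin a sig + 2)
        by (unfold a; rewrite S_INR; unfold Rmin; repeat destruct Rle_dec; lra).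
      apply power_bound_step; [split; [apply Rmin_glb; lra | apply Rmin_r]|].
      apply (power_bound_le a); [apply Rmin_l | exact IH]. }
  destruct (INR_unbounded sig) as [k Hk'].
  exists (Rmin (2 * INR k) (sig + 2)). split; [|apply Hk].
  apply Rmin_glb_lt; lra.
Qed.

Lemma source_remainder_little_o : rlim (fun x => E x / Rpower x sig) 0.
Proof.
  destruct power_bound_above as (a & Ha & M & del & HM & Hdel & HP).
  apply (rlim_of_Rpower_bound _ (2 * K * M) (a - sig)); [lra|].
  apply at_right0_iff. exists del. split; [lra|]. intros x Hx.
  destruct (HP x Hx) as [P1 P2].
  assert (HK := bootstrap_K_ge0).
  assert (Hs := Rpower_pos x sig).
  assert (Ea : Rpower x a = Rpower x sig * Rpower x (a - sig))
    by (rewrite <- Rpower_plus; f_equal; ring).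
  unfold Rdiv. rewrite Rabs_mult, Rabs_inv, (Rabs_pos_eq (Rpower x sig)) by lra.
  apply (Rmult_le_reg_r (Rpower x sig)); [exact Hs|].
  rewrite Rmult_assoc, Rinv_l, Rmult_1_r by lra.
  eapply Rle_trans; [apply HE; lra|]. rewrite Ea in P1, P2. nra.
Qed.

Lemma source_limit : rlim (fun x => (Rpower x sig * Q x + E x) / Rpower x sig) Q0.
Proof.
  assert (H := rlim_plus _ _ _ _ LQ source_remainder_little_o). rewrite Rplus_0_r in H.
  eapply filterlim_ext; [|exact H]. intros x. simpl.
  field. apply Rgt_not_eq, Rpower_pos.
Qed.

Lemma w1_asymptotic (eps : R) : 0 < eps ->
  at_right 0 (fun x => Rabs (w1 x - Q0 / (INR n + sig + 1) * Rpower x (sig + 1))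
                       <= eps * Rpower x (sig + 1)).
Proof.
  intros Heps.
  destruct (proj1 (at_right0_iff _) (filter_and _ _ (at_right0_lt d (proj1 Hd))
              (proj1 (rlim_abs _ _) source_limit eps Heps))) as (del & Hdel & Hsmall).
  apply at_right0_iff. exists del. split; [exact Hdel|].
  apply (radial_integral_asymptotic w1 (fun x => Rpower x sig * Q x + E x) n sig Q0 eps del);
    try lra; [| exact Lw1 |].
  - intros t Ht. apply Hw1. split; [lra | apply Hsmall; lra].
  - intros t Ht. destruct (Hsmall t Ht) as [_ Hq].
    assert (Hs := Rpower_pos t sig).
    replace (Rpower t sig * Q t + E t - Q0 * Rpower t sig)
      with (Rpower t sig * ((Rpower t sig * Q t + E t) / Rpower t sig - Q0)) by (field; lra).
    rewrite Rabs_mult, Rabs_pos_eq by lra. nra.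
Qed.

Lemma w_asymptotic :
  rlim (fun x => (w x - Q0 / ((sig + 2) * (sig + INR n + 1)) * Rpower x (sig + 2))
                 / Rpower x (sig + 2)) 0.
Proof.
  apply rlim_abs. intros eps Heps.
  destruct (proj1 (at_right0_iff _) (filter_and _ _ (at_right0_lt d (proj1 Hd))
              (w1_asymptotic (eps / 2) ltac:(lra)))) as (del & Hdel & Hsmall).
  apply at_right0_iff. exists del. split; [exact Hdel|]. intros x Hx.
  assert (H := radial_integral_asymptotic w w1 0 (sig + 1) (Q0 / (INR n + sig + 1)) (eps / 2) del
                 ltac:(lra) ltac:(lra)).
  replace (sig + 1 + 1) with (sig + 2) in H by ring.
  replace (Q0 / (INR n + sig + 1) / (INR 0 + (sig + 1) + 1))
    with (Q0 / ((sig + 2) * (sig + INR n + 1))) in H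
    by (simpl; field; generalize (pos_INR n); lra).
  assert (Hb : Rabs (w x - Q0 / ((sig + 2) * (sig + INR n + 1)) * Rpower x (sig + 2))
               <= eps / 2 * Rpower x (sig + 2)).
  { apply H; [| exact Lw | | exact Hx].
    - intros t Ht. apply is_derive_w_radial. split; [lra | apply Hsmall; lra].
    - intros t Ht. apply Hsmall, Ht. }
  assert (Hp := Rpower_pos x (sig + 2)).
  rewrite Rminus_0_r. unfold Rdiv. rewrite Rabs_mult, Rabs_inv, (Rabs_pos_eq (Rpower x _)) by lra.
  apply (Rmult_lt_reg_r (Rpower x (sig + 2))); [exact Hp|].
  rewrite Rmult_assoc, Rinv_l by lra. nra.
Qed.

End Bootstrap.

Lemma taylor_remainder_little_o (g : R -> R) (d e : R) (n : nat) : 0 < d ->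
  (forall k x, - d < x < d -> ex_derive_n g k x) -> e < INR (S n) ->
  rlim (fun x => (g x - sum_f_R0 (fun j => Derive_n g j 0 / INR (Factorial.fact j) * x ^ j) n)
                 / Rpower x e) 0.
Proof.
  intros Hd Hg He.
  set (D := Derive_n g (S n)).
  assert (HD : rlim D (D 0)).
  { apply rlim_cont, (ex_derive_continuous (K:=R_AbsRing) (V:=R_NormedModule)).
    apply (Hg (S (S n))); lra. }
  destruct (proj1 (at_right0_iff _) (proj1 (rlim_abs _ _) HD 1 Rlt_0_1)) as (d1 & Hd1 & Hclose).
  assert (Hfact : 0 < INR (Factorial.fact (S n))) by apply lt_0_INR, Factorial.lt_O_fact.
  apply (rlim_of_Rpower_bound _ ((Rabs (D 0) + 1) / INR (Factorial.fact (S n))) (INR (S n) - e));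
    [lra|].
  apply at_right0_iff. exists (Rmin d d1). split; [apply Rmin_glb_lt; lra|].
  intros x Hx. generalize (Rmin_l d d1) (Rmin_r d d1). intros Hxd Hxd1.
  destruct (Taylor_Lagrange g n 0 x ltac:(lra)) as [z [Hz Heq]].
  { intros t Ht k _. apply Hg; lra. }
  assert (Hrem : g x - sum_f_R0 (fun j => Derive_n g j 0 / INR (Factorial.fact j) * x ^ j) n
                 = x ^ S n / INR (Factorial.fact (S n)) * D z).
  { rewrite Heq, Rminus_0_r.
    rewrite (sum_eq (fun j => Derive_n g j 0 / INR (Factorial.fact j) * x ^ j)
                    (fun j => x ^ j / INR (Factorial.fact j) * Derive_n g j 0))
      by (intros j _; unfold Rdiv; ring).
    unfold D. ring. }
  assert (HDz : Rabs (D z) <= Rabs (D 0) + 1).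
  { specialize (Hclose z ltac:(lra)).
    replace (D z) with ((D z - D 0) + D 0) by ring.
    eapply Rle_trans; [apply Rabs_triang|]. lra. }
  assert (Ex : x ^ S n = Rpower x e * Rpower x (INR (S n) - e)).
  { rewrite <- Rpower_plus, <- Rpower_pow by lra. f_equal; ring. }
  assert (Hpe := Rpower_pos x e). assert (Hpe' := Rpower_pos x (INR (S n) - e)).
  rewrite Hrem, Ex.
  replace (Rpower x e * Rpower x (INR (S n) - e) / INR (Factorial.fact (S n)) * D z / Rpower x e)
    with (Rpower x (INR (S n) - e) / INR (Factorial.fact (S n)) * D z) by (field; lra).
  rewrite Rabs_mult, (Rabs_pos_eq (_ / _)) by (apply Rdiv_le_0_compat; lra).
  replace ((Rabs (D 0) + 1) / INR (Factorial.fact (S n)) * Rpower x (INR (S n) - e))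
    with (Rpower x (INR (S n) - e) / INR (Factorial.fact (S n)) * (Rabs (D 0) + 1))
    by (field; lra).
  apply Rmult_le_compat_l; [apply Rdiv_le_0_compat; lra | exact HDz].
Qed.

Lemma f_solution_limits (N : nat) (m sigma p A d : R) (f : R -> R) : 0 < A ->
  is_f_solution N m sigma p A d f ->
  rlim f A /\ rlim (fun x => Rpower (f x) m) (Rpower A m)
  /\ rlim (Derive (fun x => Rpower (f x) m)) 0.
Proof.
  intros HA (_ & _ & Hf0 & Hq & _ & l1 & _ & Hl1 & _ & Hq1 & _).
  rewrite Hf0 in Hq, Hq1.
  assert (Lf : rlim f A).
  { assert (H := rlim_plus _ _ _ _ (rlim_const A) (rlim_mult _ _ _ _ (rlim_pow 1) Hq)).
    rewrite pow_i, Rmult_0_l, Rplus_0_r in H by lia.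
    revert H. apply filterlim_ext_loc.
    generalize at_right0_pos. apply filter_imp. intros x Hx. simpl. field. lra. }
  assert (Lu := rlim_comp_cont f (fun y => Rpower y m) A Lf (continuous_Rpower A m HA)).
  assert (l1 = 0) as -> by exact (rlim_unique _ _ _ Hq1 (Rpower_quotient_lim f A m HA Lf Hq)).
  split; [exact Lf | split; [exact Lu | exact Hl1]].
Qed.

Lemma phi_solution_limits (N : nat) (m sigma p A d : R) (phi : R -> R) :
  is_phi_solution N m sigma p A d phi ->
  rlim (fun x => Rpower (phi x) m) (Rpower A m) /\ rlim (Derive (fun x => Rpower (phi x) m)) 0.
Proof.
  intros (Hd & Hpos & Hgd & H0 & Hex0 & HD0 & _).
  set (g := fun x => Rpower (phi x) m) in *.
  assert (Hg0 : g 0 = Rpower A m) by (unfold g; rewrite H0; reflexivity).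
  assert (Dg0 : Derive g 0 = 0).
  { apply is_derive_unique.
    assert (H := is_derive_Rpower_comp phi 0 _ m (Hpos 0 ltac:(lra)) (Derive_correct _ _ Hex0)).
    rewrite HD0, Rmult_0_r in H. exact H. }
  assert (Cg := rlim_cont g (ex_derive_continuous (K:=R_AbsRing) (V:=R_NormedModule) _ _
                               (Hgd 1%nat 0 ltac:(lra)))).
  assert (Cdg := rlim_cont (Derive g) (ex_derive_continuous (K:=R_AbsRing) (V:=R_NormedModule)
                                         _ _ (Hgd 2%nat 0 ltac:(lra)))).
  rewrite Hg0 in Cg. rewrite Dg0 in Cdg. split; [exact Cg | exact Cdg].
Qed.

Lemma radial_difference_equation (n : nat) (m sigma p A df dphi x : R) (f phi : R -> R) :
  is_f_solution (S n) m sigma p A df f -> is_phi_solution (S n) m sigma p A dphi phi ->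
  0 < x < df -> 0 < x < dphi ->
  is_derive (fun t => t ^ n * (Derive (fun y => Rpower (f y) m) t
                               - Derive (fun y => Rpower (phi y) m) t)) x
    (x ^ n * (Rpower x sigma * Rpower (f x) p
              + (- alpha m sigma p * (f x - phi x)
                 - beta m sigma p * x * (Derive f x - Derive phi x)))).
Proof.
  intros (_ & _ & _ & _ & Hfeq & _) (_ & _ & Hgd & _ & _ & _ & Hpeq) Hxf Hxp.
  destruct (Hfeq x Hxf) as (_ & _ & Hu2 & Eu). destruct (Hpeq x Hxp) as (_ & Eg).
  rewrite S_INR in Eu, Eg. replace (INR n + 1 - 1) with (INR n) in Eu, Eg by ring.
  match goal with |- is_derive _ _ (_ * ?S) =>
    replace S with ((Derive_n (fun y => Rpower (f y) m) 2 x
                     - Derive_n (fun y => Rpower (phi y) m) 2 x)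
                    + INR n / x * (Derive (fun y => Rpower (f y) m) x
                                   - Derive (fun y => Rpower (phi y) m) x)) by lra
  end.
  apply (is_derive_radial (fun t => Derive (fun y => Rpower (f y) m) t
                                    - Derive (fun y => Rpower (phi y) m) t)); [lra|].
  apply (is_derive_minus (Derive (fun y => Rpower (f y) m)) (Derive (fun y => Rpower (phi y) m)));
    apply Derive_correct; [exact Hu2 | exact (Hgd 2%nat x ltac:(lra))].
Qed.

Lemma lower_order_lipschitz (al be s r c C u g du dg x : R) :
  0 < c -> c <= u <= C -> c <= g <= C -> Rabs dg <= 1 -> 0 < x <= 1 ->
  Rabs (al * (Rpower u s - Rpower g s) + be * x * (du * Rpower u r - dg * Rpower g r))
  <= (Rabs al * Rpower_lip s c C + Rabs be * (Rpower c r + Rpower C r + Rpower_lip r c C))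
     * (Rabs (u - g) + x * Rabs (du - dg)).
Proof.
  intros Hc Hu Hg Hdg Hx.
  assert (H1 := Rpower_lipschitz u g s c C Hc Hu Hg).
  assert (H2 := mul_Rpower_lipschitz u g du dg r c C Hc Hu Hg Hdg).
  assert (T1 : Rabs (al * (Rpower u s - Rpower g s)) <= Rabs al * Rpower_lip s c C * Rabs (u - g)).
  { rewrite Rabs_mult, Rmult_assoc. apply Rmult_le_compat_l; [apply Rabs_pos | exact H1]. }
  assert (T2 : Rabs (be * x * (du * Rpower u r - dg * Rpower g r))
               <= Rabs be * ((Rpower c r + Rpower C r) * (x * Rabs (du - dg))
                             + Rpower_lip r c C * Rabs (u - g))).
  { rewrite !Rabs_mult, (Rabs_pos_eq x) by lra. rewrite Rmult_assoc.
    apply Rmult_le_compat_l; [apply Rabs_pos|].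
    assert (0 <= Rpower_lip r c C * Rabs (u - g))
      by (apply Rmult_le_pos; [apply Rpower_lip_ge0 | apply Rabs_pos]).
    apply (Rmult_le_compat_l x) in H2; [|lra]. nra. }
  eapply Rle_trans; [apply Rabs_triang|].
  generalize (Rabs_pos al) (Rabs_pos be) (Rabs_pos (u - g)) (Rabs_pos (du - dg))
    (Rpower_lip_ge0 s c C) (Rpower_lip_ge0 r c C) (Rpower_pos c r) (Rpower_pos C r). intros.
  assert (0 <= x * Rabs (du - dg)) by nra.
  assert (0 <= Rabs al * Rpower_lip s c C * (x * Rabs (du - dg)))
    by (apply Rmult_le_pos; [apply Rmult_le_pos|]; lra).
  assert (0 <= Rabs be * ((Rpower c r + Rpower C r) * Rabs (u - g)))
    by (apply Rmult_le_pos; [|apply Rmult_le_pos]; lra).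
  assert (0 <= Rabs be * (Rpower_lip r c C * (x * Rabs (du - dg))))
    by (apply Rmult_le_pos; [|apply Rmult_le_pos]; lra).
  lra.
Qed.

Definition lower_order_const (m al be c C : R) : R :=
  Rabs al * Rpower_lip (1 / m) c C
  + Rabs (be / m) * (Rpower c ((1 - m) / m) + Rpower C ((1 - m) / m)
                     + Rpower_lip ((1 - m) / m) c C).

Lemma lower_order_const_ge0 (m al be c C : R) : 0 < c -> 0 <= lower_order_const m al be c C.
Proof.
  intros Hc. unfold lower_order_const.
  generalize (Rpower_lip_ge0 (1 / m) c C) (Rpower_lip_ge0 ((1 - m) / m) c C)
    (Rpower_pos c ((1 - m) / m)) (Rpower_pos C ((1 - m) / m)) (Rabs_pos al) (Rabs_pos (be / m)).
  intros. apply Rplus_le_le_0_compat; apply Rmult_le_pos; lra.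
Qed.

Lemma lower_order_bound (m al be c C x : R) (f phi : R -> R) :
  m <> 0 -> 0 < c -> 0 < x <= 1 -> 0 < f x -> 0 < phi x -> ex_derive f x -> ex_derive phi x ->
  c <= Rpower (f x) m <= C -> c <= Rpower (phi x) m <= C ->
  Rabs (Derive (fun t => Rpower (phi t) m) x) <= 1 ->
  Rabs (- al * (f x - phi x) - be * x * (Derive f x - Derive phi x))
  <= lower_order_const m al be c C
     * (Rabs (Rpower (f x) m - Rpower (phi x) m)
        + x * Rabs (Derive (fun t => Rpower (f t) m) x - Derive (fun t => Rpower (phi t) m) x)).
Proof.
  intros Hm Hc Hx Hf Hphi Hdf Hdphi Hu Hg Hdg.
  rewrite (Derive_of_Derive_Rpower f x m), (Derive_of_Derive_Rpower phi x m) by assumption.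
  replace (f x - phi x)
    with (Rpower (Rpower (f x) m) (1 / m) - Rpower (Rpower (phi x) m) (1 / m))
    by (rewrite !Rpower_Rpower_inv; auto).
  set (u := Rpower (f x) m) in *. set (g := Rpower (phi x) m) in *.
  set (du := Derive (fun t => Rpower (f t) m) x).
  set (dg := Derive (fun t => Rpower (phi t) m) x) in *.
  set (r := (1 - m) / m).
  replace (- al * (Rpower u (1 / m) - Rpower g (1 / m))
           - be * x * (du * Rpower u r / m - dg * Rpower g r / m))
    with (- al * (Rpower u (1 / m) - Rpower g (1 / m))
          + - (be / m) * x * (du * Rpower u r - dg * Rpower g r)) by (field; exact Hm).
  unfold lower_order_const. fold r.
  rewrite <- (Rabs_Ropp al), <- (Rabs_Ropp (be / m)).
  apply lower_order_lipschitz; assumption.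
Qed.

Lemma solutions_near_zero (N : nat) (m sigma p A df dphi : R) (f phi : R -> R) :
  0 < A -> is_f_solution N m sigma p A df f -> is_phi_solution N m sigma p A dphi phi ->
  exists d, 0 < d <= 1 /\ forall x, 0 < x < d ->
    x < df /\ x < dphi
    /\ Rpower A m / 2 <= Rpower (f x) m <= 3 * Rpower A m / 2
    /\ Rpower A m / 2 <= Rpower (phi x) m <= 3 * Rpower A m / 2
    /\ Rabs (Derive (fun t => Rpower (phi t) m) x) <= 1.
Proof.
  intros HA Hf Hphi.
  destruct (f_solution_limits _ _ _ _ _ _ _ HA Hf) as (_ & Lu & _).
  destruct (phi_solution_limits _ _ _ _ _ _ _ Hphi) as (Lg & Lg1).
  destruct Hf as (Hdf & _). destruct Hphi as (Hdp & _).
  assert (HAm := Rpower_pos A m).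
  assert (Nu := proj1 (rlim_abs _ _) Lu (Rpower A m / 2) ltac:(lra)).
  assert (Ng := proj1 (rlim_abs _ _) Lg (Rpower A m / 2) ltac:(lra)).
  assert (Ng1 := proj1 (rlim_abs _ _) Lg1 1 Rlt_0_1).
  destruct (proj1 (at_right0_iff _)
    (filter_and _ _ (filter_and _ _ (at_right0_lt df Hdf) (at_right0_lt dphi Hdp))
                    (filter_and _ _ Nu (filter_and _ _ Ng Ng1))))
    as (d & Hd & Hnear).
  exists (Rmin d 1). split; [split; [apply Rmin_glb_lt; lra | apply Rmin_r]|].
  intros x Hx. generalize (Rmin_l d 1). intros.
  destruct (Hnear x ltac:(lra)) as ((H1 & H2) & H3 & H4 & H5).
  apply Rabs_def2 in H3, H4. rewrite Rminus_0_r in H5.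
  repeat split; lra.
Qed.

Lemma fm_minus_phim_asymptotic (n : nat) (m sigma p A df dphi : R) (f phi : R -> R) :
  m <> 0 -> 0 < sigma -> 0 < A ->
  is_f_solution (S n) m sigma p A df f -> is_phi_solution (S n) m sigma p A dphi phi ->
  rlim (fun x => (Rpower (f x) m - Rpower (phi x) m
                  - Rpower A p / ((sigma + 2) * (sigma + INR n + 1)) * Rpower x (sigma + 2))
                 / Rpower x (sigma + 2)) 0.
Proof.
  intros Hm Hs HA Hf Hphi.
  destruct (f_solution_limits _ _ _ _ _ _ _ HA Hf) as (Lf & Lu & Lu1).
  destruct (phi_solution_limits _ _ _ _ _ _ _ Hphi) as (Lg & Lg1).
  destruct (solutions_near_zero _ _ _ _ _ _ _ _ _ HA Hf Hphi) as (d & Hd & Hnear).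
  assert (Hdiff := fun x => radial_difference_equation n m sigma p A df dphi x f phi Hf Hphi).
  destruct Hf as (_ & Hfpos & _ & _ & Hfeq & _).
  destruct Hphi as (_ & Hppos & Hgd & _ & _ & _ & Hpeq).
  set (u := fun x => Rpower (f x) m) in *. set (g := fun x => Rpower (phi x) m) in *.
  set (c := Rpower A m / 2) in *. set (C := 3 * Rpower A m / 2) in *.
  assert (Hc : 0 < c) by (unfold c; generalize (Rpower_pos A m); lra).
  set (al := alpha m sigma p). set (be := beta m sigma p).
  set (Kq := Rpower c (p / m) + Rpower C (p / m)).
  assert (HKq : 0 <= Kq)
    by (unfold Kq; generalize (Rpower_pos c (p / m)) (Rpower_pos C (p / m)); lra).
  assert (HKE := lower_order_const_ge0 m al be c C Hc).
  apply (w_asymptotic d sigma (Kq + lower_order_const m al be c C) (Rpower A p) n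
    (fun x => u x - g x) (fun x => Derive u x - Derive g x) (fun x => Rpower (f x) p)
    (fun x => - al * (f x - phi x) - be * x * (Derive f x - Derive phi x)) Hd Hs).
  - intros x Hx. destruct (Hnear x Hx) as (Hxf & Hxp & _).
    apply (is_derive_minus u g); apply Derive_correct;
      [apply (Hfeq x); lra | apply (Hgd 1%nat); lra].
  - intros x Hx. destruct (Hnear x Hx) as (Hxf & Hxp & _). apply Hdiff; lra.
  - assert (H := rlim_minus _ _ _ _ Lu Lg). rewrite Rminus_diag in H. exact H.
  - assert (H := rlim_minus _ _ _ _ Lu1 Lg1). rewrite Rminus_0_r in H. exact H.
  - exact (rlim_comp_cont f (fun y => Rpower y p) A Lf (continuous_Rpower A p HA)).
  - intros x Hx. destruct (Hnear x Hx) as (Hxf & _ & Hu & _).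
    replace (Rpower (f x) p) with (Rpower (u x) (p / m))
      by (unfold u; rewrite Rpower_mult; f_equal; field; exact Hm).
    rewrite Rabs_pos_eq by (left; apply Rpower_pos).
    assert (Rpower (u x) (p / m) <= Kq) by (apply Rpower_le_ends; [exact Hc | exact Hu]).
    lra.
  - intros x Hx. destruct (Hnear x Hx) as (Hxf & Hxp & Hu & Hg & Hdg).
    eapply Rle_trans.
    + apply (lower_order_bound m al be c C x f phi Hm Hc); try assumption; try lra.
      * apply Hfpos; lra.
      * apply Hppos; lra.
      * apply (Hfeq x); lra.
      * apply (Hpeq x); lra.
    + apply Rmult_le_compat_r; [|lra].
      generalize (Rabs_pos (u x - g x)) (Rabs_pos (Derive u x - Derive g x)). nra.
Qed.

Lemma fm_expansion (N n : nat) (m sigma p A df dphi : R) (f phi : R -> R) :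
  (1 <= N)%nat -> m <> 0 -> 0 < sigma -> 0 < A -> sigma + 2 < INR (S n) ->
  is_f_solution N m sigma p A df f -> is_phi_solution N m sigma p A dphi phi ->
  little_o_right
    (fun x => Rpower (f x) m - sum_f_R0 (fun j => taylorB m phi j * x ^ j) n
              - Rpower A p / ((sigma + 2) * (sigma + INR N)) * Rpower x (sigma + 2))
    (sigma + 2).
Proof.
  intros HN Hm Hs HA Hn Hf Hphi.
  destruct N as [|n0]; [lia|].
  assert (Hdiff := fm_minus_phim_asymptotic n0 m sigma p A df dphi f phi Hm Hs HA Hf Hphi).
  destruct Hphi as (Hdp & _ & Hgd & _).
  assert (Htaylor := taylor_remainder_little_o _ dphi (sigma + 2) n Hdp Hgd Hn).
  assert (H := rlim_plus _ _ _ _ Hdiff Htaylor). rewrite Rplus_0_r in H.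
  unfold little_o_right. revert H. apply filterlim_ext. intros x.
  unfold taylorB. rewrite S_INR.
  field. repeat split; first [apply Rgt_not_eq, Rpower_pos | generalize (pos_INR n0); lra].
Qed.

Theorem lemma4p2 (N : nat) (m sigma p A : R) (k0 : nat)
  (f phi : R -> R) (df dphi : R)
  (HN : (1 <= N)%nat) (Hm : 1 < m) (Hsigma : 0 < sigma) (Hp : m < p)
  (HA : 0 < A)
  (Hk0 : INR k0 < sigma <= INR k0 + 1)
  (Hf : is_f_solution N m sigma p A df f)
  (Hphi : is_phi_solution N m sigma p A dphi phi) :
  ((~ exists n : nat, sigma = INR n) ->
     little_o_right
       (fun x => Rpower (f x) m
          - sum_f_R0 (fun j => taylorB m phi j * x ^ j) (k0 + 2)
          - Rpower A p / ((sigma + 2) * (sigma + INR N))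
              * Rpower x (sigma + 2))
       (sigma + 2)) /\
  ((exists n : nat, sigma = INR n) ->
     little_o_right
       (fun x => Rpower (f x) m
          - sum_f_R0 (fun j => taylorB m phi j * x ^ j) (k0 + 3)
          - Rpower A p / ((sigma + 2) * (sigma + INR N))
              * Rpower x (sigma + 2))
       (sigma + 2)).
Proof.
  assert (Hm0 : m <> 0) by lra.
  split.
  - intros Hnot_int. apply (fm_expansion N (k0 + 2) m sigma p A df dphi); auto.
    assert (sigma <> INR k0 + 1)
      by (intros Heq; apply Hnot_int; exists (S k0); rewrite S_INR; exact Heq).
    rewrite S_INR, plus_INR. simpl (INR 2). lra.
  - intros _. apply (fm_expansion N (k0 + 3) m sigma p A df dphi); auto.
    rewrite S_INR, plus_INR. simpl (INR 3). lra.
Qed.
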